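(* The following are true: (i) $T_0<T_{1}<T_2<T_{3}$ for $4\pi$-arc $LSL$ paths; (ii) $T_{-1}<T_{-2}<T_{-3}<T_{-4}$ for $4\pi$-arc $RSR$ paths.
   Context: A curvature-constrained (Dubins) vehicle with unit speed $v=1$ and minimum turning radius $r>0$ moves in a steady environmental current with velocity $(w_x,w_y)=(v_w\cos\theta_w, v_w\sin\theta_w)$, where $0<v_w<1$, according to $\dot x = \cos\theta + w_x$, $\dot y=\sin\theta + w_y$, $\dot\theta = u$, $|u|\le 1/r$. The start pose is $(0,0,0)$ and the goal pose is $(x_f,y_f,\theta_f)$ with $\theta_f\in[0,2\pi)$. In the frame moving with the current, an $L^{\alpha}S^{\beta}L^{\gamma}$ path (left arc of angle $\alpha$, straight segment of length $\beta\ge 0$, left arc of angle $\gamma$) reaching the goal with total travel time $T$ must satisfy $x_f - w_x T = r\sin\theta_f + \beta\cos\alpha$, $y_f - w_y T = r(1-\cos\theta_f)+\beta\sin\alpha$, $T = r(\alpha+\gamma)+\beta$, $\alpha+\gamma = 2k\pi+\theta_f$ with $k\in\mathbb{Z}$. An $R^{\alpha}S^{\beta}R^{\gamma}$ path must satisfy $x_f - w_x T = -r\sin\theta_f + \beta\cos\alpha$, $y_f - w_y T = -r(1-\cos\theta_f)-\beta\sin\alpha$, $T = r(\alpha+\gamma)+\beta$, $-\alpha-\gamma = 2k\pi+\theta_f$. A $4\pi$-arc path is one with $\alpha,\gamma\in[0,4\pi)$; this gives $k\in\{0,1,2,3\}$ for $LSL$ and $k\in\{-1,-2,-3,-4\}$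 for $RSR$. For a given $k$, $\beta_k$ denotes the straight-segment length of the corresponding solution and $T_k$ its travel time, so that $T_k = 2k\pi r + r\theta_f + \beta_k$ for an $LSL$ path and $T_k = -2k\pi r - r\theta_f + \beta_k$ for an $RSR$ path. *)

From Stdlib Require Import Reals Lra ZArith.
Open Scope R_scope.

(* An L^alpha S^beta L^gamma path with winding index k reaching (xf,yf,thf)
   from (0,0,0) in the current (wx,wy) with travel time T (equations written
   in the frame moving with the current). *)
Definition LSL_solution (r wx wy xf yf thf : R) (k : Z)
    (alpha beta gamma T : R) : Prop :=
  xf - wx * T = r * sin thf + beta * cos alpha /\
  yf - wy * T = r * (1 - cos thf) + beta * sin alpha /\
  T = r * (alpha + gamma) + beta /\
  alpha + gamma = 2 * IZR k * PI + thf /\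
  0 <= beta.

Definition RSR_solution (r wx wy xf yf thf : R) (k : Z)
    (alpha beta gamma T : R) : Prop :=
  xf - wx * T = - r * sin thf + beta * cos alpha /\
  yf - wy * T = - r * (1 - cos thf) - beta * sin alpha /\
  T = r * (alpha + gamma) + beta /\
  - alpha - gamma = 2 * IZR k * PI + thf /\
  0 <= beta.

Definition four_pi_arc (alpha gamma : R) : Prop :=
  0 <= alpha < 4 * PI /\ 0 <= gamma < 4 * PI.

(* Subtracting the position equations of two solutions, the difference of
   their straight-segment vectors is the displacement of the current during
   the time difference d = T' - T, so |beta' - beta| <= v_w |d|.  The arcs
   of the two paths differ by 2 (k' - k) pi in total angle, whence
   d = 2 |k' - k| pi r + (beta' - beta); as v_w < 1 this forces d > 0. *)

From Stdlib Require Import Reals ZArith Lra Psatz.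
Open Scope R_scope.

Lemma Rsqr_diff_le_dist2_polar (b b' a a' : R) :
  0 <= b -> 0 <= b' ->
  (b - b') ^ 2 <= (b * cos a - b' * cos a') ^ 2 + (b * sin a - b' * sin a') ^ 2.
Proof.
  intros Hb Hb'.
  assert (Hcos : cos (a - a') <= 1) by apply COS_bound.
  rewrite cos_minus in Hcos.
  assert (Hsa := sin2_cos2 a); assert (Hsa' := sin2_cos2 a'); unfold Rsqr in *.
  assert (Hbb' : 0 <= b * b' * (1 - (cos a * cos a' + sin a * sin a')))
    by (apply Rmult_le_pos; [apply Rmult_le_pos|]; lra).
  nra.
Qed.

Lemma straight_gap_le_drift (b b' a a' wx wy d : R) :
  0 <= b -> 0 <= b' ->
  b * cos a - b' * cos a' = wx * d ->
  b * sin a - b' * sin a' = wy * d ->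
  (b - b') ^ 2 <= (wx ^ 2 + wy ^ 2) * d ^ 2.
Proof.
  intros Hb Hb' Hx Hy.
  replace ((wx ^ 2 + wy ^ 2) * d ^ 2) with ((wx * d) ^ 2 + (wy * d) ^ 2) by ring.
  rewrite <- Hx, <- Hy.
  now apply Rsqr_diff_le_dist2_polar.
Qed.

Lemma pos_of_shifted_sqr_le (q c d : R) :
  0 <= q < 1 -> 0 < c -> (d - c) ^ 2 <= q * d ^ 2 -> 0 < d.
Proof.
  intros Hq Hc Hle.
  destruct (Rlt_or_le 0 d) as [|Hd]; [assumption|exfalso].
  nra.
Qed.

Lemma winding_gap_pos (r : R) (k k' : Z) :
  0 < r -> (k < k')%Z -> 0 < 2 * (IZR k' - IZR k) * PI * r.
Proof.
  intros Hr Hkk.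
  assert (0 < IZR k' - IZR k) by (apply Rlt_0_minus, IZR_lt; assumption).
  pose proof PI_RGT_0.
  apply Rmult_lt_0_compat; [apply Rmult_lt_0_compat|]; lra.
Qed.

Section ArrivalTimes.

Variables (r wx wy xf yf thf : R).
Hypothesis r_pos : 0 < r.
Hypothesis current_slow : wx ^ 2 + wy ^ 2 < 1.

Lemma LSL_time_increasing (k k' : Z) (a b g T a' b' g' T' : R) :
  (k < k')%Z ->
  LSL_solution r wx wy xf yf thf k a b g T ->
  LSL_solution r wx wy xf yf thf k' a' b' g' T' ->
  T < T'.
Proof.
  intros Hkk [E1 [E2 [E3 [E4 Eb]]]] [F1 [F2 [F3 [F4 Fb]]]].
  assert (Hgap : (b' - b) ^ 2 <= ((- wx) ^ 2 + (- wy) ^ 2) * (T' - T) ^ 2)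
    by (apply (straight_gap_le_drift b' b a' a); lra).
  apply Rlt_0_minus.
  apply (pos_of_shifted_sqr_le (wx ^ 2 + wy ^ 2) (2 * (IZR k' - IZR k) * PI * r)).
  - nra.
  - now apply winding_gap_pos.
  - replace (T' - T - 2 * (IZR k' - IZR k) * PI * r) with (b' - b)
      by (rewrite E4 in E3; rewrite F4 in F3; lra).
    lra.
Qed.

Lemma RSR_time_increasing (k k' : Z) (a b g T a' b' g' T' : R) :
  (k' < k)%Z ->
  RSR_solution r wx wy xf yf thf k a b g T ->
  RSR_solution r wx wy xf yf thf k' a' b' g' T' ->
  T < T'.
Proof.
  intros Hkk [E1 [E2 [E3 [E4 Eb]]]] [F1 [F2 [F3 [F4 Fb]]]].
  assert (Hgap : (b' - b) ^ 2 <= ((- wx) ^ 2 + wy ^ 2) * (T' - T) ^ 2)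
    by (apply (straight_gap_le_drift b' b a' a); lra).
  apply Rlt_0_minus.
  apply (pos_of_shifted_sqr_le (wx ^ 2 + wy ^ 2) (2 * (IZR k - IZR k') * PI * r)).
  - nra.
  - now apply winding_gap_pos.
  - replace (T' - T - 2 * (IZR k - IZR k') * PI * r) with (b' - b)
      by (assert (E : a + g = - (2 * IZR k * PI + thf)) by lra;
          assert (F : a' + g' = - (2 * IZR k' * PI + thf)) by lra;
          rewrite E in E3; rewrite F in F3; lra).
    lra.
Qed.

End ArrivalTimes.

Theorem theorem2 :
  forall (r vw thw xf yf thf : R),
    0 < r -> 0 < vw < 1 -> 0 <= thf < 2 * PI ->
    let wx := vw * cos thw in
    let wy := vw * sin thw in
    (* (i) LSL: T_0 < T_1 < T_2 < T_3, i.e. T_k strictly increasing in k *)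
    (forall (k k' : Z) (a b g T a' b' g' T' : R),
        (0 <= k)%Z -> (k < k')%Z -> (k' <= 3)%Z ->
        four_pi_arc a g -> LSL_solution r wx wy xf yf thf k a b g T ->
        four_pi_arc a' g' -> LSL_solution r wx wy xf yf thf k' a' b' g' T' ->
        T < T')
    /\
    (* (ii) RSR: T_{-1} < T_{-2} < T_{-3} < T_{-4} *)
    (forall (k k' : Z) (a b g T a' b' g' T' : R),
        (-4 <= k')%Z -> (k' < k)%Z -> (k <= -1)%Z ->
        four_pi_arc a g -> RSR_solution r wx wy xf yf thf k a b g T ->
        four_pi_arc a' g' -> RSR_solution r wx wy xf yf thf k' a' b' g' T' ->
        T < T').
Proof.
  intros r vw thw xf yf thf Hr Hv _ wx wy.
  assert (Hslow : wx ^ 2 + wy ^ 2 < 1).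
  { pose proof (sin2_cos2 thw) as Hunit; unfold Rsqr in Hunit.
    replace (wx ^ 2 + wy ^ 2) with (vw ^ 2 * (sin thw * sin thw + cos thw * cos thw))
      by (unfold wx, wy; ring).
    rewrite Hunit; nra. }
  split.
  - intros k k' a b g T a' b' g' T' _ Hkk _ _ Hsol _ Hsol'.
    exact (LSL_time_increasing r wx wy xf yf thf Hr Hslow k k' a b g T a' b' g' T' Hkk Hsol Hsol').
  - intros k k' a b g T a' b' g' T' _ Hkk _ _ Hsol _ Hsol'.
    exact (RSR_time_increasing r wx wy xf yf thf Hr Hslow k k' a b g T a' b' g' T' Hkk Hsol Hsol').
Qed.
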